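(* Let $n$ be a positive integer and $x\in\Gamma_n$. Then every vertex $v$ of the BPSP graph $G_x$ satisfies $\deg_{G_x}(v)\le 4$.
   Context: Let $[n]=\{1,\dots,n\}$. $\Gamma_n$ is the set of words $x=(x_1,\dots,x_{2n})\in[n]^{2n}$ in which every symbol of $[n]$ occurs exactly twice. $[\,\cdot\,]$ is the Iverson bracket. For $i\in[2n-1]$, $\eta(x,i)=[x_{i+1}\in\{x_1,\dots,x_i\}]\oplus[x_i\in\{x_1,\dots,x_{i-1}\}]$. For $e\subseteq[n]$, $\theta_x(e)=-\sum_{i=1}^{2n-1}(-1)^{\eta(x,i)}\delta_{e,\{x_i,x_{i+1}\}}$. The BPSP graph $G_x=(V_x,E_x,W_x)$ has $V_x=[n]$, $E_x=\{\{x_i,x_{i+1}\}: i\in[2n-1],\ x_i\neq x_{i+1},\ \theta_x(\{x_i,x_{i+1}\})\neq0\}$, $W_x=\theta_x|_{E_x}$. $\deg_G(v)=|\{u\in V:\{u,v\}\in E\}|$. *)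

From mathcomp Require Import all_boot all_order all_algebra.
Set Implicit Arguments. Unset Strict Implicit. Unset Printing Implicit Defensive.
Import GRing.Theory Num.Theory.

(* Symbols [n] = {1,...,n} are represented by 'I_n = {0,...,n-1};
   a word x = (x_1,...,x_{2n}) is a sequence of symbols. *)

Definition Gamma (n : nat) (x : seq 'I_n) : bool :=
  (size x == 2 * n) && [forall a : 'I_n, count_mem a x == 2].

(* The steps i = 1..2n-1 of the word, encoded 0-based as j = i-1 together
   with the consecutive pair (x_i, x_{i+1}). *)
Definition steps (n : nat) (x : seq 'I_n) : seq (nat * ('I_n * 'I_n)) :=
  zip (iota 0 (size x).-1) (zip x (behead x)).

(* eta(x,i) = [x_{i+1} in {x_1..x_i}] xor [x_i in {x_1..x_{i-1}}],
   with j = i - 1:  {x_1..x_i} = take (j+1) x, {x_1..x_{i-1}} = take j x. *)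
Definition eta (n : nat) (x : seq 'I_n) (s : nat * ('I_n * 'I_n)) : bool :=
  (s.2.2 \in take s.1.+1 x) (+) (s.2.1 \in take s.1 x).

Definition theta (n : nat) (x : seq 'I_n) (e : {set 'I_n}) : int :=
  (- \sum_(s <- steps x) (-1) ^+ eta x s * (e == [set s.2.1; s.2.2])%:R)%R.

Definition BPSP_edges (n : nat) (x : seq 'I_n) : {set {set 'I_n}} :=
  [set e : {set 'I_n} | has (fun s => [&& e == [set s.2.1; s.2.2],
                                          s.2.1 != s.2.2 &
                                          theta x [set s.2.1; s.2.2] != 0%R])
                            (steps x)].

Definition BPSP_weight (n : nat) (x : seq 'I_n) (e : {set 'I_n}) : int := theta x e.

Definition deg (n : nat) (E : {set {set 'I_n}}) (v : 'I_n) : nat :=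
  #|[set u : 'I_n | [set u; v] \in E]|.

From mathcomp Require Import all_boot all_order all_algebra.

(* Every edge of G_x joins the two letters of some step (x_i, x_{i+1}) with
   x_i <> x_{i+1}.  Hence every neighbour of v is the
   left or the right neighbour of one of the two occurrences of v in x, so v
   has at most 2 * 2 = 4 neighbours. *)

Lemma mem_zip_snd {S T : eqType} (s : seq S) (t : seq T) p :
  p \in zip s t -> p.2 \in t.
Proof.
elim: s t => [|a s IH] [|b t] //=; rewrite inE => /orP [/eqP -> | /IH].
  by rewrite /= eqxx.
by move=> ->; rewrite orbT.
Qed.

Lemma count_zip_fst {S T : eqType} (s : seq S) (t : seq T) a :
  count (fun p => p.1 == a) (zip s t) <= count_mem a s.
Proof. by elim: s t => [|b s IH] [|c t] //=; rewrite eq_sym leq_add2l. Qed.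

Lemma count_zip_snd {S T : eqType} (s : seq S) (t : seq T) b :
  count (fun p => p.2 == b) (zip s t) <= count_mem b t.
Proof. by elim: s t => [|a s IH] [|c t] //=; rewrite eq_sym leq_add2l. Qed.

Lemma count_behead {T : eqType} (s : seq T) a :
  count_mem a (behead s) <= count_mem a s.
Proof. by case: s => //= b s; rewrite leq_addl. Qed.

Definition word_neighbours {T : eqType} (s : seq T) (v : T) : seq T :=
  [seq p.1 | p <- zip s (behead s) & p.2 == v] ++
  [seq p.2 | p <- zip s (behead s) & p.1 == v].

Lemma size_word_neighbours {T : eqType} (s : seq T) v :
  size (word_neighbours s v) <= 2 * count_mem v s.
Proof.
rewrite size_cat !size_map !size_filter mul2n -addnn leq_add //.
  exact: leq_trans (count_zip_snd _ _ _) (count_behead _ _).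
exact: count_zip_fst.
Qed.

Lemma set2_eq {T : finType} [a b u v : T] :
  a != b -> [set a; b] = [set u; v] -> (a = u /\ b = v) \/ (a = v /\ b = u).
Proof.
move=> neq_ab eq_ab_uv.
have /set2P [] : v \in [set a; b] by rewrite eq_ab_uv set22.
- move=> eq_va; subst v; right; split=> //.
  have /set2P [] // : b \in [set u; a] by rewrite -eq_ab_uv set22.
  by move=> eq_ba; rewrite eq_ba eqxx in neq_ab.
- move=> eq_vb; subst v; left; split=> //.
  have /set2P [] // : a \in [set u; b] by rewrite -eq_ab_uv set21.
  by move=> eq_ab; rewrite eq_ab eqxx in neq_ab.
Qed.

Lemma mem_word_neighbours {T : finType} (s : seq T) (a b u v : T) :
  (a, b) \in zip s (behead s) -> a != b -> [set a; b] = [set u; v] ->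
  u \in word_neighbours s v.
Proof.
move=> ab_step neq_ab /(set2_eq neq_ab) [[<- <-] | [<- <-]]; rewrite mem_cat.
  by rewrite (map_f _ (_ : (a, b) \in _)) // mem_filter eqxx.
by rewrite orbC (map_f _ (_ : (a, b) \in _)) // mem_filter eqxx.
Qed.

Lemma BPSP_edge_from_step {n : nat} (x : seq 'I_n) e :
  e \in BPSP_edges x ->
  exists2 p, p \in zip x (behead x) & (p.1 != p.2) && (e == [set p.1; p.2]).
Proof.
rewrite inE => /hasP [s /mem_zip_snd s_step /and3P [eq_e neq_s _]].
by exists s.2; rewrite // neq_s eq_e.
Qed.

Lemma deg_BPSP_edges {n : nat} (x : seq 'I_n) v :
  deg (BPSP_edges x) v <= 2 * count_mem v x.
Proof.
apply: leq_trans (size_word_neighbours x v).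
apply: leq_trans (card_size _); apply: subset_leq_card.
apply/subsetP => u; rewrite inE => /BPSP_edge_from_step [[a b] ab_step].
case/andP=> neq_ab /eqP eq_uv.
exact: mem_word_neighbours ab_step neq_ab (esym eq_uv).
Qed.

Theorem proposition5 (n : nat) (x : seq 'I_n) :
  0 < n -> Gamma x -> forall v : 'I_n, deg (BPSP_edges x) v <= 4.
Proof.
move=> _ /andP [_ /forallP twice] v.
by rewrite (leq_trans (deg_BPSP_edges x v)) // (eqP (twice v)).
Qed.
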